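(* Fix integers $s\ge t\ge 1$ and $n\ge 0$. Let $\mathcal{B}_{s,t}(n)$ be the number of distinct sets of balls that can be on the lawn after $n$ turns of the $(s,t)$-tennis ball process. Then $\mathcal{B}_{s,t}(n)=|\mathrm{SVT}((n+1)^2,\rho)|$, where $\rho$ is the density on the shape $(n+1,n+1)$ with $\rho_{1,j}=t$ and $\rho_{2,j}=s-t$ for all $1\le j\le n+1$.
   Context: The $(s,t)$-tennis ball process: balls are numbered $1,2,\dots,ns$. There is a pool, initially empty. At turn $i$ ($1\le i\le n$), the balls numbered $(i-1)s+1,\dots,is$ are added to the pool, and then any $t$ balls of the pool are removed from it and thrown onto the lawn. After $n$ turns the lawn contains a set of $nt$ balls; $\mathcal{B}_{s,t}(n)$ counts the possible such sets over all possible choices. A density on a shape $\lambda$ is an assignment of a nonnegative integer $\rho_{i,j}$ to every cell $(i,j)$ (row $i$, column $j$); let $N=\sum\rho_{i,j}$. A standard set-valued Young tableau of shape $\lambda$ and density $\rho$ assigns to each cell $(i,j)$ a set $S_{i,j}$ with $|S_{i,j}|=\rho_{i,j}$, the sets partitioning $[N]$, such that every element of $S_{i,j}$ is smaller than every element of $S_{i,j+1}$ and of $S_{i+1,j}$ whenever those cells exist (conditions involving an empty set are vacuous). $\mathrm{SVT}(\lambda,\rho)$ is the set of these tableaux. *)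

From mathcomp Require Import all_boot.
Set Implicit Arguments. Unset Strict Implicit. Unset Printing Implicit Defensive.

(* ---------- The (s,t)-tennis ball process ----------
   Ball number b+1 (1 <= b+1 <= n*s) is represented by the ordinal b : 'I_(n*s).
   Turn i+1 (i : 'I_n) adds balls (i*s+1) .. ((i+1)*s), i.e. ordinals b < (i+1)*s.
   A run of the process is the sequence R of sets of balls thrown at each turn:
   at turn i+1 one throws t balls from the pool, i.e. t balls among those already
   added (b < (i+1)*s) and not thrown at an earlier turn. *)
Definition tennis_run (s t n : nat) (R : {ffun 'I_n -> {set 'I_(n * s)}}) : bool :=
  [forall i : 'I_n,
     (#|R i| == t)
     && [forall b in R i, b < i.+1 * s]
     && [forall j : 'I_n, (j < i) ==> [disjoint R j & R i]]].

Definition lawn (s n : nat) (R : {ffun 'I_n -> {set 'I_(n * s)}}) : {set 'I_(n * s)} :=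
  \bigcup_(i : 'I_n) R i.

Definition tennisB (s t n : nat) : nat :=
  #|[set L : {set 'I_(n * s)} |
      [exists R : {ffun 'I_n -> {set 'I_(n * s)}}, tennis_run t R && (L == lawn R)]]|.

(* ---------- Standard set-valued Young tableaux ----------
   A shape lam is a seq nat (row lengths, row 0 first); cells are (i,j) with
   i < size lam, j < nth 0 lam i (0-based: row i+1, column j+1 of the paper).
   A density is rho : nat -> nat -> nat (only its values on cells matter).
   Tableaux are families of sets S indexed by 'I_r * 'I_c (r rows, c = max row
   length); S is required to be empty outside the shape. *)
Definition in_shape (lam : seq nat) (i j : nat) : bool :=
  (i < size lam) && (j < nth 0 lam i).

Definition shape_rows (lam : seq nat) : nat := size lam.
Definition shape_cols (lam : seq nat) : nat := \max_(x <- lam) x.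

Definition svt_N (lam : seq nat) (rho : nat -> nat -> nat) : nat :=
  \sum_(i < size lam) \sum_(j < nth 0 lam i) rho i j.

Definition cell (lam : seq nat) := ('I_(shape_rows lam) * 'I_(shape_cols lam))%type.

Definition is_svt (lam : seq nat) (rho : nat -> nat -> nat)
    (S : {ffun cell lam -> {set 'I_(svt_N lam rho)}}) : bool :=
  [forall a : cell lam,
     if in_shape lam a.1 a.2 then #|S a| == rho a.1 a.2 else S a == set0]
  && [forall a : cell lam, forall b : cell lam, (a != b) ==> [disjoint S a & S b]]
  && (\bigcup_(a : cell lam) S a == setT)
  && [forall a : cell lam, forall b : cell lam,
        [&& in_shape lam a.1 a.2, in_shape lam b.1 b.2 &
            ((b.1 == a.1 :> nat) && (b.2 == a.2.+1 :> nat))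
            || ((b.1 == a.1.+1 :> nat) && (b.2 == a.2 :> nat))]
        ==> [forall x in S a, forall y in S b, x < y]].

Definition nSVT (lam : seq nat) (rho : nat -> nat -> nat) : nat :=
  #|[set S : {ffun cell lam -> {set 'I_(svt_N lam rho)}} | is_svt S]|.

Definition tennis_rho (s t : nat) : nat -> nat -> nat :=
  fun i _ => if i == 0 then t else s - t.

From mathcomp Require Import all_boot zify.
Set Implicit Arguments. Unset Strict Implicit. Unset Printing Implicit Defensive.

(* A set L of n t balls is a possible lawn iff for every k <= n at least k t of
   the first k s balls lie in L: the first k turns only throw balls among the
   first k s, and conversely throwing the elements of L in increasing order, t per
   turn, is a valid run.
   A tableau of shape (n+1, n+1) with row densities t and s - t is determined by
   the union X of its first row: each row is an increasing family of sets, hence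
   the sequence of consecutive blocks of t (resp. s - t) elements of X (resp. of
   its complement), and the column condition becomes a ballot condition: for
   every k <= n at least (k+1) t of the first k s + t numbers lie in X.
   The two ballot conditions correspond under X = {1, ..., t} u (L + t). *)

Lemma disjointP (T : finType) (A B : {pred T}) :
  reflect (forall x, x \in A -> x \in B -> False) [disjoint A & B].
Proof.
apply: (iffP pred0P) => [AB x xA xB|AB x /=]; first by have := AB x; rewrite /= xA xB.
by apply/negbTE/andP=> -[/AB].
Qed.

Section Below.
Variable M : nat.
Implicit Types (X : {set 'I_M}) (x y : 'I_M).

Definition nbelow X (m : nat) : nat := #|[set x in X | x < m]|.

Lemma nbelow_mono X : {homo nbelow X : m p / m <= p}.
Proof.
move=> m p le_mp; apply: subset_leq_card; apply/subsetP=> x; rewrite !inE.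
by case/andP=> -> /leq_trans; apply.
Qed.

Lemma nbelow_le_card X m : nbelow X m <= #|X|.
Proof. by apply: subset_leq_card; apply/subsetP=> x; rewrite inE => /andP[]. Qed.

Lemma nbelowS X x : x \in X -> nbelow X x.+1 = (nbelow X x).+1.
Proof.
move=> xX; rewrite /nbelow -add1n.
have -> : [set y in X | y < x.+1] = x |: [set y in X | y < x].
  apply/setP=> y; rewrite !inE ltnS leq_eqVlt val_eqE.
  by case: (eqVneq y x) => [->|]; rewrite ?xX.
by rewrite cardsU1 inE ltnn andbF.
Qed.

Lemma nbelow_lt_card X x : x \in X -> nbelow X x < #|X|.
Proof. by move=> xX; rewrite -nbelowS //; apply: nbelow_le_card. Qed.

Lemma nbelow_ltE X x m : x \in X -> (nbelow X x < nbelow X m) = (x < m).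
Proof.
move=> xX; apply/idP/idP; last by move=> lt_xm; rewrite -nbelowS //; apply: nbelow_mono.
by apply: contraLR; rewrite -!leqNgt; apply: nbelow_mono.
Qed.

Lemma nbelow_inj X : {in X &, injective (fun x : 'I_M => nbelow X x)}.
Proof.
move=> x y xX yX e; apply: val_inj; case: (ltngtP x y) => // lt.
  by move: lt; rewrite -(nbelow_ltE _ xX) e ltnn.
by move: lt; rewrite -(nbelow_ltE _ yX) e ltnn.
Qed.

Lemma card_initial m : m <= M -> #|[set x : 'I_M | x < m]| = m.
Proof.
move=> le_mM; have widen_inj : injective (widen_ord le_mM).
  by move=> a b /(congr1 val) /= /val_inj.
rewrite -[RHS]card_ord -(card_imset _ widen_inj).
apply: eq_card => x; rewrite inE; apply/idP/imsetP => [lt_xm|[y _ ->]]; last exact: ltn_ord y.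
by exists (Ordinal lt_xm) => //; apply/val_inj.
Qed.

Lemma nbelowC X m : m <= M -> nbelow X m + nbelow (~: X) m = m.
Proof.
move=> le_mM; rewrite -[RHS](card_initial le_mM) -cardsUI.
have -> : [set x in X | x < m] :&: [set x in ~: X | x < m] = set0.
  by apply/setP=> x; rewrite !inE; case: (x \in X); rewrite ?andbF.
rewrite cards0 addn0; apply: eq_card => x; rewrite !inE.
by case: (x \in X); rewrite ?orbF.
Qed.

Lemma nbelow_card_lt X m x : #|X| <= nbelow X m -> x \in X -> x < m.
Proof.
move=> le_Xm xX; rewrite -(nbelow_ltE _ xX).
exact: leq_trans (nbelow_lt_card xX) le_Xm.
Qed.

Lemma nbelow_full_mem X m x : m <= M -> m <= nbelow X m -> x < m -> x \in X.
Proof.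
move=> le_mM full lt_xm.
have : nbelow (~: X) m = 0 by have := nbelowC X le_mM; lia.
by move/eqP; rewrite cards_eq0 => /eqP/setP/(_ x); rewrite !inE lt_xm andbT => /negbFE.
Qed.

Lemma card_nbelow_pred X (P : pred nat) :
  #|[set x in X | P (nbelow X x)]| = count P (iota 0 #|X|).
Proof.
set r := [seq nbelow X x | x <- enum X].
have uniq_r : uniq r.
  by rewrite map_inj_in_uniq ?enum_uniq // => x y; rewrite !mem_enum; apply: nbelow_inj.
have sub_r : {subset r <= iota 0 #|X|}.
  by move=> i /mapP[x]; rewrite mem_enum mem_iota => xX ->; rewrite nbelow_lt_card.
have perm_r : perm_eq r (iota 0 #|X|).
  apply: uniq_perm; rewrite ?iota_uniq //.
  by apply: (uniq_min_size uniq_r sub_r _).2; rewrite size_map -cardE size_iota.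
rewrite -(permP perm_r) count_map cardE /enum_mem size_filter count_filter.
by apply: eq_count => x; rewrite !inE andbC.
Qed.

End Below.

Lemma count_iota_window a b m :
  count (fun r => a <= r < b) (iota 0 m) = minn b m - minn a m.
Proof.
elim: m => [|m IH]; first by rewrite !minn0.
rewrite -addn1 iotaD count_cat IH /= addn0.
by case: (leqP a m) => /= ?; case: (ltnP m b) => /= ?; lia.
Qed.

Definition chunk M (X : {set 'I_M}) (c j : nat) : {set 'I_M} :=
  [set x in X | j * c <= nbelow X x < j.+1 * c].

Section Chunks.
Variables (M c : nat) (X : {set 'I_M}).

Lemma card_chunk K j : #|X| = K * c -> j < K -> #|chunk X c j| = c.
Proof.
move=> card_X lt_jK.
rewrite (card_nbelow_pred X (fun r => j * c <= r < j.+1 * c)) card_X count_iota_window.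
have: j.+1 * c <= K * c by rewrite leq_mul2r lt_jK orbT.
rewrite mulSn; lia.
Qed.

Lemma chunk_lt i j x y : i < j -> x \in chunk X c i -> y \in chunk X c j -> x < y.
Proof.
move=> lt_ij; rewrite !inE => /andP[xX /andP[_ x_lt]] /andP[_ /andP[y_ge _]].
rewrite -(nbelow_ltE _ xX); apply: leq_trans x_lt (leq_trans _ y_ge).
by rewrite leq_mul2r lt_ij orbT.
Qed.

Lemma chunk_disjoint i j : i != j -> [disjoint chunk X c i & chunk X c j].
Proof.
move=> ne_ij; apply/disjointP=> x xi xj.
case: (ltngtP i j) => [lt_ij|lt_ji|eq_ij]; last by rewrite eq_ij eqxx in ne_ij.
  by have := chunk_lt lt_ij xi xj; rewrite ltnn.
by have := chunk_lt lt_ji xj xi; rewrite ltnn.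
Qed.

Lemma chunk_cover K x : #|X| = K * c -> x \in X -> exists2 j, j < K & x \in chunk X c j.
Proof.
move=> card_X xX; have : 0 < K * c by rewrite -card_X card_gt0; apply/set0Pn; exists x.
rewrite muln_gt0 => /andP[_ c_gt0].
exists (nbelow X x %/ c); last by rewrite inE xX leq_divM ltn_ceil.
by rewrite ltn_divLR // -card_X nbelow_lt_card.
Qed.

End Chunks.

Definition union_upto M (T : nat -> {set 'I_M}) (k : nat) : {set 'I_M} :=
  \bigcup_(j < k) T j.

Section Unions.
Variables (M c : nat) (T : nat -> {set 'I_M}).

Lemma mem_union_upto k x : reflect (exists2 j, j < k & x \in T j) (x \in union_upto T k).
Proof.
apply: (iffP bigcupP) => [[j _ xT]|[j lt_jk xT]]; first by exists j.
by exists (Ordinal lt_jk).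
Qed.

Lemma card_union_upto K k :
    (forall j, j < K -> #|T j| = c) ->
    (forall i j, i < j -> j < K -> [disjoint T i & T j]) ->
  k <= K -> #|union_upto T k| = k * c.
Proof.
move=> card_T disj_T; elim: k => [|k IH] lt_kK; first by rewrite /union_upto big_ord0 cards0.
rewrite /union_upto big_ord_recr /= -/(union_upto T k) cardsU (IH (ltnW lt_kK)) card_T //.
suff -> : union_upto T k :&: T k = set0 by rewrite cards0 subn0 mulSn addnC.
apply/setP=> x; rewrite !inE; apply/negP=> /andP[/mem_union_upto[i lt_ik xTi] xTk].
by rewrite (disjointFr (disj_T i k lt_ik lt_kK) xTi) in xTk.
Qed.

Variable m : nat.
Hypothesis card_T : forall j, j < m -> #|T j| = c.

Lemma increasing_of_succ :
    (forall j x y, j.+1 < m -> x \in T j -> y \in T j.+1 -> x < y) ->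
  forall i j x y, i < j -> j < m -> x \in T i -> y \in T j -> x < y.
Proof.
move=> T_succ i j; elim: j => [|j IH] x y; first by rewrite ltn0.
rewrite ltnS leq_eqVlt => /orP[/eqP ->|lt_ij] lt_jm xTi yTj.
  exact: T_succ _ _ _ lt_jm xTi yTj.
have c_gt0 : 0 < c.
  by rewrite -(card_T (ltn_trans lt_ij (ltnW lt_jm))) card_gt0; apply/set0Pn; exists x.
have /set0Pn[z zTj] : T j != set0 by rewrite -card_gt0 card_T // ltnW.
exact: ltn_trans (IH x z lt_ij (ltnW lt_jm) xTi zTj) (T_succ j z y lt_jm zTj yTj).
Qed.

Hypothesis T_increasing : forall i j x y, i < j -> j < m -> x \in T i -> y \in T j -> x < y.

Lemma increasing_disjoint i j : i < j -> j < m -> [disjoint T i & T j].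
Proof.
move=> lt_ij lt_jm; apply/disjointP=> x xTi xTj.
by have := T_increasing lt_ij lt_jm xTi xTj; rewrite ltnn.
Qed.

Lemma nbelow_union_upto j x :
  j < m -> x \in T j -> nbelow (union_upto T m) x = j * c + nbelow (T j) x.
Proof.
move=> lt_jm xTj; rewrite /nbelow.
have -> : [set y in union_upto T m | y < x] = union_upto T j :|: [set y in T j | y < x].
  apply/setP=> y; rewrite !inE; apply/andP/orP => [[/mem_union_upto[i lt_im yTi] lt_yx]|].
    case: (ltngtP i j) => [lt_ij|lt_ji|<-]; [left|exfalso|by right; rewrite yTi].
      by apply/mem_union_upto; exists i.
    by have := T_increasing lt_ji lt_im xTj yTi; rewrite ltnNge ltnW.
  case=> [/mem_union_upto[i lt_ij yTi]|/andP[yTj lt_yx]].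
    split; last exact: T_increasing lt_ij lt_jm yTi xTj.
    by apply/mem_union_upto; exists i; rewrite ?(ltn_trans lt_ij).
  by split=> //; apply/mem_union_upto; exists j.
rewrite cardsU (card_union_upto card_T increasing_disjoint (ltnW lt_jm)).
suff -> : union_upto T j :&: [set y in T j | y < x] = set0 by rewrite cards0 subn0.
apply/setP=> y; rewrite !inE; apply/negP=> /and3P[/mem_union_upto[i lt_ij yTi] yTj _].
by rewrite (disjointFr (increasing_disjoint lt_ij lt_jm) yTi) in yTj.
Qed.

Lemma increasing_chunk j : j < m -> T j = chunk (union_upto T m) c j.
Proof.
move=> lt_jm; apply/setP=> x; rewrite inE.
have [xU|] := boolP (x \in union_upto T m); last first.
  by apply: contraNF => xTj; apply/mem_union_upto; exists j.
have [i lt_im xTi] := mem_union_upto _ _ xU.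
rewrite (nbelow_union_upto lt_im xTi) /=.
have := nbelow_lt_card xTi; rewrite card_T //.
move: (nbelow (T i) x) => r lt_rc.
have lt_ic : i * c + r < i.+1 * c by rewrite mulSn; lia.
have -> : (x \in T j) = (i == j).
  apply/idP/eqP => [xTj|<- //].
  case: (ltngtP i j) => // [lt_ij|lt_ji].
    by have := T_increasing lt_ij lt_jm xTi xTj; rewrite ltnn.
  by have := T_increasing lt_ji lt_im xTj xTi; rewrite ltnn.
apply/eqP/idP => [<-|/andP[le_jr lt_rj]]; first by rewrite leq_addr.
have /andP[_ lt_ij1] : (0 < c) && (i < j.+1).
  by rewrite -ltn_mul2r (leq_ltn_trans (leq_addr r _) lt_rj).
have /andP[_ lt_ji1] : (0 < c) && (j < i.+1).
  by rewrite -ltn_mul2r (leq_ltn_trans le_jr lt_ic).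
by apply/eqP; rewrite eqn_leq -ltnS lt_ij1 -ltnS lt_ji1.
Qed.

End Unions.

Definition feasible_lawn s t n (L : {set 'I_(n * s)}) : bool :=
  (#|L| == n * t) && [forall k : 'I_n.+1, k * t <= nbelow L (k * s)].
Arguments feasible_lawn : clear implicits.

Section Lawns.
Variables s t n : nat.

(* Reindexing by nat, with set0 past the last turn, makes the lemmas on families
   [nat -> {set _}] available; [svt_row] below does the same for tableau rows. *)
Definition turn (R : {ffun 'I_n -> {set 'I_(n * s)}}) (j : nat) : {set 'I_(n * s)} :=
  if insub j is Some i then R i else set0.

Lemma turn_ord R (i : 'I_n) : turn R i = R i.
Proof. by rewrite /turn valK. Qed.

Lemma turnE R j (lt_jn : j < n) : turn R j = R (Ordinal lt_jn).
Proof. exact: (turn_ord R (Ordinal lt_jn)). Qed.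

Lemma lawn_union_upto R : lawn R = union_upto (turn R) n.
Proof.
apply/setP=> x; apply/bigcupP/mem_union_upto => [[i _ xRi]|[j lt_jn]].
  by exists i; rewrite ?turn_ord.
by rewrite turnE; exists (Ordinal lt_jn).
Qed.

Section Run.
Variable R : {ffun 'I_n -> {set 'I_(n * s)}}.
Hypothesis run_R : tennis_run t R.

Lemma card_turn j : j < n -> #|turn R j| = t.
Proof.
move=> lt_jn; rewrite turnE.
by case/forallP/(_ (Ordinal lt_jn))/andP: run_R => /andP[/eqP].
Qed.

Lemma turn_disjoint i j : i < j -> j < n -> [disjoint turn R i & turn R j].
Proof.
move=> lt_ij lt_jn; rewrite (turnE _ (ltn_trans lt_ij lt_jn)) turnE.
by case/forallP/(_ (Ordinal lt_jn))/andP: run_R => _ /forallP/(_ (Ordinal _))/implyP; apply.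
Qed.

Lemma turn_lt j x : j < n -> x \in turn R j -> x < j.+1 * s.
Proof.
move=> lt_jn; rewrite turnE.
by case/forallP/(_ (Ordinal lt_jn))/andP: run_R => /andP[_ /forallP/(_ x)/implyP].
Qed.

Lemma lawn_feasible : feasible_lawn s t n (lawn R).
Proof.
rewrite /feasible_lawn lawn_union_upto (card_union_upto card_turn turn_disjoint) // eqxx /=.
apply/forallP=> k; have le_kn : k <= n := ltnSE (ltn_ord k).
rewrite -(card_union_upto card_turn turn_disjoint le_kn); apply: subset_leq_card.
apply/subsetP=> x /mem_union_upto[j lt_jk xTj]; have lt_jn := leq_trans lt_jk le_kn.
have le_jk : j.+1 * s <= k * s by rewrite leq_mul2r lt_jk orbT.
rewrite inE (leq_trans (turn_lt lt_jn xTj) le_jk) andbT.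
by apply/mem_union_upto; exists j.
Qed.

End Run.

Lemma feasible_lawn_run (L : {set 'I_(n * s)}) :
  feasible_lawn s t n L -> exists2 R, tennis_run t R & L = lawn R.
Proof.
case/andP=> /eqP card_L /forallP below_L.
exists [ffun i : 'I_n => chunk L t i].
  apply/forallP=> i; rewrite ffunE (card_chunk card_L) //= eqxx /=.
  apply/andP; split.
    apply/forall_inP=> x; rewrite inE => /and3P[xL _ lt_x].
    rewrite -(nbelow_ltE _ xL); apply: leq_trans lt_x _.
    exact: (below_L (Ordinal (ltn_ord i : i.+1 < n.+1))).
  apply/forallP=> j; apply/implyP=> lt_ji; rewrite ffunE chunk_disjoint //.
  by rewrite neq_ltn lt_ji.
apply/setP=> x; apply/idP/bigcupP => [xL|[i _]]; last first.
  by rewrite ffunE inE => /andP[].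
have [j lt_jn xLj] := chunk_cover card_L xL.
by exists (Ordinal lt_jn); rewrite ?ffunE.
Qed.

Lemma tennisB_feasible : tennisB s t n = #|[set L | feasible_lawn s t n L]|.
Proof.
apply: eq_card => L; rewrite !inE; apply/existsP/idP => [[R /andP[run_R /eqP ->]]|].
  exact: lawn_feasible.
by case/feasible_lawn_run=> R run_R ->; exists R; rewrite run_R eqxx.
Qed.

End Lawns.

Definition feasible_top s t n N (X : {set 'I_N}) : bool :=
  (#|X| == n.+1 * t) && [forall k : 'I_n.+1, k.+1 * t <= nbelow X (k * s + t)].
Arguments feasible_top : clear implicits.

Section Padding.
Variables s t n N : nat.
Hypothesis t_le_s : t <= s.
Hypothesis N_eq : N = n.+1 * s.

Lemma shift_proof (y : 'I_(n * s)) : y + t < N.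
Proof. by have := ltn_ord y; rewrite N_eq mulSn; lia. Qed.

Definition shift (y : 'I_(n * s)) : 'I_N := Ordinal (shift_proof y).

Lemma shift_inj : injective shift.
Proof. by move=> y z /(congr1 val) /= /addIn /val_inj. Qed.

Definition pad (L : {set 'I_(n * s)}) : {set 'I_N} :=
  [set x : 'I_N | x < t] :|: shift @: L.

Lemma t_le_N : t <= N.
Proof. by rewrite N_eq mulSn; lia. Qed.

Lemma initial_shift_disjoint (A : {set 'I_(n * s)}) :
  [disjoint [set x : 'I_N | x < t] & shift @: A].
Proof.
apply/disjointP=> x; rewrite inE => lt_xt /imsetP[y _ xE].
by move: lt_xt; rewrite xE /= ltnNge leq_addl.
Qed.

Lemma card_pad L : #|pad L| = t + #|L|.
Proof.
rewrite cardsU disjoint_setI0 ?initial_shift_disjoint // cards0 subn0.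
by rewrite card_initial ?t_le_N // card_imset //; apply: shift_inj.
Qed.

Lemma nbelow_pad L m : nbelow (pad L) (m + t) = t + nbelow L m.
Proof.
rewrite /nbelow -card_pad; apply: eq_card => x; rewrite !inE.
have [lt_xt|_] /= := ltnP x t; first by rewrite (leq_trans lt_xt) ?leq_addl.
apply/andP/imsetP => [[/imsetP[y yL ->]] /= lt_ym|[y]].
  by exists y; rewrite // inE yL -(ltn_add2r t).
rewrite inE => /andP[yL lt_ym] ->; split; first exact: imset_f.
by rewrite /= ltn_add2r.
Qed.

Lemma mem_pad_shift L y : (shift y \in pad L) = (y \in L).
Proof. by rewrite !inE /= ltnNge leq_addl /= mem_imset //; apply: shift_inj. Qed.

Lemma pad_inj : injective pad.
Proof. by move=> L L' eq_pad; apply/setP=> y; rewrite -!mem_pad_shift eq_pad. Qed.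

Lemma feasible_top_pad L : feasible_top s t n N (pad L) = feasible_lawn s t n L.
Proof.
rewrite /feasible_top /feasible_lawn card_pad mulSn eqn_add2l; congr (_ && _).
by apply: eq_forallb => k; rewrite nbelow_pad mulSn leq_add2l.
Qed.

Lemma feasible_top_unpad X : feasible_top s t n N X -> X = pad [set y | shift y \in X].
Proof.
case/andP=> /eqP card_X /forallP below_X; apply/setP=> x; rewrite !inE.
have [lt_xt|le_tx] /= := ltnP x t.
  apply: nbelow_full_mem lt_xt; first exact: t_le_N.
  by have := below_X ord0; rewrite mul0n mul1n.
apply/idP/imsetP => [xX|[y]]; last by rewrite inE => ? ->.
have lt_x : x - t < n * s.
  have full_X : #|X| <= nbelow X (n * s + t) by rewrite card_X; apply: (below_X ord_max).
  by have := nbelow_card_lt full_X xX; lia.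
have x_shift : x = shift (Ordinal lt_x) by apply: val_inj; rewrite /= subnK.
by exists (Ordinal lt_x); rewrite // inE -x_shift.
Qed.

Lemma card_feasible_top :
  #|[set X | feasible_top s t n N X]| = #|[set L | feasible_lawn s t n L]|.
Proof.
rewrite -(card_imset _ pad_inj); apply: eq_card => X; rewrite inE.
apply/idP/imsetP => [feas_X|[L]]; last by rewrite inE -feasible_top_pad => ? ->.
have X_pad := feasible_top_unpad feas_X.
by exists [set y | shift y \in X]; rewrite // inE -feasible_top_pad -X_pad.
Qed.

End Padding.

Lemma ord2P (r : 'I_2) : r = ord0 \/ r = ord_max.
Proof. by case: r => [[|[|//]] lt_r]; [left|right]; apply: val_inj. Qed.

Section TwoRowTableaux.
Variables s t n : nat.
Hypothesis t_le_s : t <= s.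

Local Notation lam := [:: n.+1; n.+1].
Local Notation rho := (tennis_rho s t).
Local Notation N := (svt_N lam rho).
Local Notation tableau := {ffun cell lam -> {set 'I_N}}.

Lemma shape_cols_rect : shape_cols lam = n.+1.
Proof. by rewrite /shape_cols !big_cons big_nil maxn0 maxnn. Qed.

Lemma col_ltn (j : 'I_(shape_cols lam)) : j < n.+1.
Proof. exact: leq_trans (ltn_ord j) (eq_leq shape_cols_rect). Qed.

Lemma svt_N_rect : N = n.+1 * s.
Proof.
rewrite /svt_N big_ord_recl big_ord_recl big_ord0 /=.
by rewrite !sum_nat_const !card_ord /tennis_rho /= addn0 -mulnDr subnKC.
Qed.

Lemma in_shape_rect (a : cell lam) : in_shape lam a.1 a.2.
Proof.
case: a => [[r lt_r] j]; rewrite /in_shape /= lt_r.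
by case: r lt_r => [|[|//]] _; rewrite /= col_ltn.
Qed.

Definition adjacent (a b : cell lam) : bool :=
  ((b.1 == a.1 :> nat) && (b.2 == a.2.+1 :> nat))
  || ((b.1 == a.1.+1 :> nat) && (b.2 == a.2 :> nat)).

Lemma is_svt_rectP (S : tableau) :
  reflect [/\ forall a, #|S a| = rho a.1 a.2,
              forall a b, a != b -> [disjoint S a & S b],
              forall x, exists a, x \in S a &
              forall a b x y, adjacent a b -> x \in S a -> y \in S b -> x < y]
          (is_svt S).
Proof.
rewrite /is_svt -!andbA; apply: (iffP and4P) => -[card_S disj_S cover_S lt_S]; split.
- by move=> a; move/forallP/(_ a): card_S; rewrite in_shape_rect => /eqP.
- by move=> a b; move/forallP/(_ a)/forallP/(_ b)/implyP: disj_S.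
- move=> x; have /bigcupP[a _ xSa] : x \in \bigcup_a S a by rewrite (eqP cover_S) inE.
  by exists a.
- move=> a b x y adj_ab xSa ySb; move/forallP/(_ a)/forallP/(_ b)/implyP: lt_S.
  by rewrite !in_shape_rect => /(_ adj_ab)/forall_inP/(_ x xSa)/forall_inP/(_ y ySb).
- by apply/forallP=> a; rewrite in_shape_rect card_S.
- by apply/forallP=> a; apply/forallP=> b; apply/implyP/disj_S.
- apply/eqP/setP=> x; rewrite inE; have [a xSa] := cover_S x.
  by apply/bigcupP; exists a.
- apply/forallP=> a; apply/forallP=> b; rewrite !in_shape_rect; apply/implyP=> adj_ab.
  by apply/forall_inP=> x xSa; apply/forall_inP=> y ySb; apply: lt_S adj_ab xSa ySb.
Qed.

Local Notation top := (ord0 : 'I_2).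
Local Notation bottom := (ord_max : 'I_2).

Definition svt_row (S : tableau) (r : 'I_2) (j : nat) : {set 'I_N} :=
  if insub j is Some j' then S (r, j') else set0.

Lemma ltn_cols j : j < n.+1 -> j < shape_cols lam.
Proof. by rewrite shape_cols_rect. Qed.

Lemma svt_row_ord S r (j : 'I_(shape_cols lam)) : svt_row S r j = S (r, j).
Proof. by rewrite /svt_row valK. Qed.

Lemma svt_rowE S r j (lt_jn : j < n.+1) : svt_row S r j = S (r, Ordinal (ltn_cols lt_jn)).
Proof. exact: (svt_row_ord S r (Ordinal (ltn_cols lt_jn))). Qed.

Definition top_row (S : tableau) : {set 'I_N} := union_upto (svt_row S top) n.+1.

Section ValidTableau.
Variable S : tableau.
Hypothesis svt_S : is_svt S.

Lemma card_svt_row r j : j < n.+1 -> #|svt_row S r j| = rho r 0.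
Proof. by move=> lt_jn; case/is_svt_rectP: svt_S => card_S _ _ _; rewrite svt_rowE card_S. Qed.

Lemma svt_row_succ_lt r j x y :
  j.+1 < n.+1 -> x \in svt_row S r j -> y \in svt_row S r j.+1 -> x < y.
Proof.
move=> lt_jn; rewrite (svt_rowE _ _ (ltnW lt_jn)) svt_rowE.
by case/is_svt_rectP: svt_S => _ _ _; apply; rewrite /adjacent /= !eqxx.
Qed.

Lemma svt_col_lt j x y :
  j < n.+1 -> x \in svt_row S top j -> y \in svt_row S bottom j -> x < y.
Proof.
move=> lt_jn; rewrite !(svt_rowE _ _ lt_jn).
by case/is_svt_rectP: svt_S => _ _ _; apply; rewrite /adjacent /=.
Qed.

Lemma svt_row_lt r i j x y :
  i < j -> j < n.+1 -> x \in svt_row S r i -> y \in svt_row S r j -> x < y.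
Proof. exact: (increasing_of_succ (card_svt_row r) (@svt_row_succ_lt r)). Qed.

Lemma svt_top_bottom_lt i j x y :
  i <= j -> j < n.+1 -> x \in svt_row S top i -> y \in svt_row S bottom j -> x < y.
Proof.
rewrite leq_eqVlt => /orP[/eqP ->|lt_ij lt_jn xTi yBj]; first exact: svt_col_lt.
have lt_in := ltn_trans lt_ij lt_jn.
have /set0Pn[z zBi] : svt_row S bottom i != set0.
  rewrite -card_gt0 card_svt_row // -(card_svt_row bottom lt_jn) card_gt0.
  by apply/set0Pn; exists y.
exact: ltn_trans (svt_col_lt lt_in xTi zBi) (svt_row_lt lt_ij lt_jn zBi yBj).
Qed.

Lemma bottom_rowE : union_upto (svt_row S bottom) n.+1 = ~: top_row S.
Proof.
case/is_svt_rectP: svt_S => _ disj_S cover_S _.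
apply/setP=> x; rewrite inE; apply/idP/idP => [/mem_union_upto[j lt_jn xBj]|not_top].
  apply/negP=> /mem_union_upto[i lt_in xTi].
  move: xBj xTi; rewrite (svt_rowE _ _ lt_jn) (svt_rowE _ _ lt_in) => xBj.
  by rewrite (disjointFr (disj_S _ _ _) xBj).
have [[r j] xSrj] := cover_S x.
have lt_jn := col_ltn j.
have xrj : x \in svt_row S r j by rewrite svt_row_ord.
apply/mem_union_upto; exists j => //; case: (ord2P r) xrj => -> // xTj.
by case/negP: not_top; apply/mem_union_upto; exists j.
Qed.

Lemma svt_row_chunk r j :
  j < n.+1 -> svt_row S r j = chunk (union_upto (svt_row S r) n.+1) (rho r 0) j.
Proof. exact: (increasing_chunk (card_svt_row r) (@svt_row_lt r)). Qed.

Lemma card_svt_union r k : k <= n.+1 -> #|union_upto (svt_row S r) k| = k * rho r 0.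
Proof. exact: (card_union_upto (card_svt_row r) (increasing_disjoint (@svt_row_lt r))). Qed.

Lemma top_row_lt j x : j < n.+1 -> x \in svt_row S top j -> x < j * s + t.
Proof.
(* Fewer than (j+1) t entries of the top row lie below x, and by the column
   condition only entries of the first j bottom cells do. *)
move=> lt_jn xTj; set X := top_row S.
have split_x : nbelow X x + nbelow (~: X) x = x := nbelowC X (ltnW (ltn_ord x)).
have below_X : nbelow X x < j * t + t.
  rewrite (nbelow_union_upto (card_svt_row top) (@svt_row_lt top) lt_jn xTj) ltn_add2l.
  by have := nbelow_lt_card xTj; rewrite card_svt_row.
have below_Y : nbelow (~: X) x <= j * (s - t).
  rewrite -bottom_rowE -[_ * (s - t)](card_svt_union bottom (ltnW lt_jn)).
  apply: subset_leq_card; apply/subsetP=> y.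
  rewrite inE => /andP[/mem_union_upto[i lt_in yBi] lt_yx].
  apply/mem_union_upto; exists i => //; rewrite ltnNge; apply/negP=> le_ji.
  by have := svt_top_bottom_lt le_ji lt_in xTj yBi; rewrite ltnNge (ltnW lt_yx).
have : j * (s - t) + j * t = j * s by rewrite -mulnDr subnK.
lia.
Qed.

Lemma top_row_feasible : feasible_top s t n N (top_row S).
Proof.
rewrite /feasible_top card_svt_union // eqxx /=; apply/forallP=> k.
rewrite -[_ * t](card_svt_union top (ltn_ord k)); apply: subset_leq_card.
apply/subsetP=> x /mem_union_upto[j lt_jk xTj]; have lt_jn := leq_trans lt_jk (ltn_ord k).
have le_jk : j * s + t <= k * s + t by rewrite leq_add2r leq_mul2r ltnSE ?orbT.
rewrite inE (leq_trans (top_row_lt lt_jn xTj) le_jk) andbT.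
by apply/mem_union_upto; exists j.
Qed.

End ValidTableau.

Definition row_set (X : {set 'I_N}) (r : nat) : {set 'I_N} := if r == 0 then X else ~: X.

Definition svt_of_top (X : {set 'I_N}) : tableau :=
  [ffun a : cell lam => chunk (row_set X a.1) (rho a.1 0) a.2].

Lemma top_rowK S : is_svt S -> svt_of_top (top_row S) = S.
Proof.
move=> svt_S; apply/ffunP=> [[r j]]; rewrite ffunE /= -svt_row_ord.
rewrite (svt_row_chunk svt_S _ (col_ltn j)); case: (ord2P r) => -> //=.
by rewrite bottom_rowE.
Qed.

Section FeasibleTop.
Variable X : {set 'I_N}.
Hypothesis feas_X : feasible_top s t n N X.

Lemma card_row_set (r : 'I_2) : #|row_set X r| = n.+1 * rho r 0.
Proof.
case/andP: feas_X => /eqP card_X _; case: (ord2P r) => -> //=.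
have := cardsC X; have := svt_N_rect; rewrite card_ord card_X mulnBr.
by rewrite /row_set /=; have := leq_mul (leqnn n.+1) t_le_s; lia.
Qed.

Lemma chunk_top_bottom_lt j x y :
  j < n.+1 -> x \in chunk X t j -> y \in chunk (~: X) (s - t) j -> x < y.
Proof.
case/andP: feas_X => _ /forallP below_X lt_jn.
move=> /setIdP[xX /andP[_ lt_x]] /setIdP[yY /andP[le_y _]].
have below_js := below_X (Ordinal lt_jn); rewrite /= in below_js.
have x_lt : x < j * s + t by rewrite -(nbelow_ltE _ xX) (leq_trans lt_x).
rewrite ltnNge; apply/negP=> le_yx.
have : nbelow (~: X) y < nbelow (~: X) (j * s + t).
  by rewrite nbelow_ltE // (leq_ltn_trans le_yx x_lt).
have le_N : j * s + t <= N.
  by have := svt_N_rect; have := leq_mul (ltnSE lt_jn) (leqnn s); rewrite mulSn; lia.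
have := nbelowC X le_N; have : j * (s - t) + j * t = j * s by rewrite -mulnDr subnK.
rewrite mulSn in below_js; lia.
Qed.

Lemma svt_of_top_svt : is_svt (svt_of_top X).
Proof.
apply/is_svt_rectP; split.
- by move=> [r j]; rewrite ffunE (card_chunk (card_row_set r)) ?col_ltn.
- move=> [r i] [r' j] ne; rewrite !ffunE /=; have [eq_r|ne_r] := eqVneq r r'.
    rewrite -eq_r in ne *; apply: chunk_disjoint.
    by apply: contraNneq ne => /val_inj ->.
  apply/disjointP=> x /setIdP[xr _] /setIdP[xr' _]; move: ne_r xr xr'.
  by case: (ord2P r) (ord2P r') => -> [] ->; rewrite /row_set /= ?inE => // _; case: (x \in X).
- move=> z; pose r : 'I_2 := if z \in X then ord0 else ord_max.
  have zr : z \in row_set X r.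
    by rewrite /r /row_set; case: (boolP (z \in X)) => zX /=; rewrite ?inE.
  have [j lt_jn zrj] := chunk_cover (card_row_set r) zr.
  by exists (r, Ordinal (ltn_cols lt_jn)); rewrite ffunE.
- move=> [r i] [r' j] x y; rewrite /adjacent !ffunE /=.
  case/orP=> /andP[/eqP eq_r /eqP eq_j].
    rewrite (val_inj eq_r) => xri yrj; apply: chunk_lt xri yrj.
    by rewrite eq_j.
  case: (ord2P r) (ord2P r') eq_r => -> [] -> //= _.
  by rewrite eq_j; apply: chunk_top_bottom_lt; rewrite col_ltn.
Qed.

Lemma svt_of_topK : top_row (svt_of_top X) = X.
Proof.
apply/setP=> x; apply/mem_union_upto/idP => [[j lt_jn]|xX].
  by rewrite svt_rowE ffunE => /setIdP[].
have [j lt_jn xXj] := chunk_cover (card_row_set ord0) xX.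
by exists j; rewrite // svt_rowE ffunE.
Qed.

End FeasibleTop.

Lemma nSVT_feasible_top : nSVT lam rho = #|[set X | feasible_top s t n N X]|.
Proof.
have top_row_inj : {in [set S | is_svt S] &, injective top_row}.
  by move=> S S'; rewrite !inE => svt_S svt_S' eq_top; rewrite -(top_rowK svt_S) eq_top top_rowK.
rewrite /nSVT -(card_in_imset top_row_inj); apply: eq_card => X; rewrite inE.
apply/imsetP/idP => [[S]|feas_X]; first by rewrite inE => svt_S ->; apply: top_row_feasible.
by exists (svt_of_top X); rewrite ?inE ?svt_of_top_svt ?svt_of_topK.
Qed.

End TwoRowTableaux.

Theorem theorem4 (s t n : nat) (ht : 1 <= t) (hts : t <= s) :
  tennisB s t n = nSVT [:: n.+1; n.+1] (tennis_rho s t).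
Proof.
rewrite tennisB_feasible (nSVT_feasible_top n hts).
exact/esym/card_feasible_top/svt_N_rect.
Qed.
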